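(* Let $p$ be an odd prime, $n=2k$, and $\mathcal{S}=\{y\in\mathbb{F}_{p^n}: T^n_k(y)=0\}$. Let $L(x)=\sum_{j=0}^{n-1}c_jx^{p^j}$ with all $c_j\in\mathbb{F}_{p^k}$ be a linearized polynomial that permutes $\mathbb{F}_{p^n}$, let $\delta\in\mathcal{S}$, and let $s\in\{2,4,\dots,p^n-1\}$ be even. Then the mapping $$G(x)=-L(x)+(x+\delta)^s-(x+\delta)^{p^ks}$$ permutes $\mathcal{S}$, and consequently $$F(x)=L(x)+(x^{p^k}-x+\delta)^s$$ is a permutation of $\mathbb{F}_{p^n}$.
   Context: $T^n_k(\beta)=\beta+\beta^{p^k}$ for $n=2k$ is the relative trace from $\mathbb{F}_{p^n}$ to $\mathbb{F}_{p^k}$. *)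

From mathcomp Require Import all_boot all_algebra all_field.
Set Implicit Arguments. Unset Strict Implicit. Unset Printing Implicit Defensive.
Import GRing.Theory.
Local Open Scope ring_scope.

(* Relative trace T^n_k(b) = b + b^(p^k) from F_{p^n} to F_{p^k}, n = 2k. *)
Definition rel_trace (K : finFieldType) (p k : nat) (b : K) : K :=
  b + b ^+ (p ^ k).

Definition in_subfield (K : finFieldType) (p k : nat) (c : K) : bool :=
  c ^+ (p ^ k) == c.

Definition linearized (K : finFieldType) (p n : nat) (c : nat -> K) (x : K) : K :=
  \sum_(j < n) c j * x ^+ (p ^ j).

(* f permutes the subset S: maps S into S and is injective on S
   (equivalently bijective on S, S finite). *)
Definition permutes_on (K : finFieldType) (S : pred K) (f : K -> K) : Prop :=
  (forall x, S x -> S (f x)) /\ {in S &, injective f}.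

(* The q-Frobenius x |-> x^q, q = p^k, is an additive involution of K, and the
   trace-zero set S is its (-1)-eigenspace.  Hence an even power of an element
   of S lies in the fixed field F_q, so G agrees with -L on S; and L commutes
   with the trace since its coefficients lie in F_q, so -L permutes S.  For F,
   the map x |-> x^q - x sends F(x) to L(x^q - x) because (x^q - x + delta)^s
   is again an even power of an element of S; since L is injective, F(x) = F(y)
   forces x^q - x = y^q - y, then L x = L y, then x = y. *)
From mathcomp Require Import all_boot all_algebra all_field.
Set Implicit Arguments.
Unset Strict Implicit.
Unset Printing Implicit Defensive.

Import GRing.Theory.
Local Open Scope ring_scope.

Section FrobeniusPowers.

Variables (K : comNzRingType) (p : nat).
Hypothesis pcharK : p \in [pchar K].

Lemma pchar_pnat_expn j : [pchar K].-nat (p ^ j)%N.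
Proof.
by rewrite (eq_pnat _ (pcharf_eq pcharK)) pnatX (pnat_id (pcharf_prime pcharK)).
Qed.

Lemma expr_pchar_expnD j (x y : K) : (x + y) ^+ (p ^ j) = x ^+ (p ^ j) + y ^+ (p ^ j).
Proof. exact/exprDn_pchar/pchar_pnat_expn. Qed.

Lemma expr_pchar_expnN j (x : K) : (- x) ^+ (p ^ j) = - x ^+ (p ^ j).
Proof. exact/exprNn_pchar/pchar_pnat_expn. Qed.

Lemma expr_pchar_expnB j (x y : K) : (x - y) ^+ (p ^ j) = x ^+ (p ^ j) - y ^+ (p ^ j).
Proof. by rewrite expr_pchar_expnD expr_pchar_expnN. Qed.

End FrobeniusPowers.

Section LinearizedPolynomial.

Variables (K : finFieldType) (p n : nat) (c : nat -> K).
Hypothesis pcharK : p \in [pchar K].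

Local Notation L := (linearized p n c).

Lemma linearizedB (x y : K) : L (x - y) = L x - L y.
Proof.
rewrite /linearized -sumrB; apply: eq_bigr => j _.
by rewrite expr_pchar_expnB // mulrBr.
Qed.

Lemma linearized0 : L 0 = 0.
Proof. by have := linearizedB 0 0; rewrite !subrr. Qed.

Lemma linearizedN (x : K) : L (- x) = - L x.
Proof. by rewrite -sub0r linearizedB linearized0 sub0r. Qed.

Lemma linearizedD (x y : K) : L (x + y) = L x + L y.
Proof. by have := linearizedB x (- y); rewrite opprK linearizedN opprK. Qed.

Lemma expr_linearized_subfield k (x : K) :
  (forall j, (j < n)%N -> in_subfield p k (c j)) ->
  L x ^+ (p ^ k) = L (x ^+ (p ^ k)).
Proof.
move=> c_sub; have zeroX : (0 : K) ^+ (p ^ k) = 0.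
  by rewrite expr0n expn_eq0 eqn0Ngt (prime_gt0 (pcharf_prime pcharK)).
rewrite /linearized (big_morph _ (expr_pchar_expnD pcharK k) zeroX).
apply: eq_bigr => j _.
by rewrite exprMn (eqP (c_sub j (ltn_ord j))) -!exprM mulnC.
Qed.

Lemma rel_trace_linearized k (x : K) :
  (forall j, (j < n)%N -> in_subfield p k (c j)) ->
  rel_trace p k (L x) = L (rel_trace p k x).
Proof. by move=> c_sub; rewrite /rel_trace expr_linearized_subfield // linearizedD. Qed.

End LinearizedPolynomial.

Section TraceZero.

Variables (K : finFieldType) (p k : nat).
Hypothesis pcharK : p \in [pchar K].
Hypothesis cardK : #|K| = (p ^ (2 * k))%N.

Local Notation q := (p ^ k)%N.

Lemma rel_traceD (x y : K) : rel_trace p k (x + y) = rel_trace p k x + rel_trace p k y.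
Proof. by rewrite /rel_trace expr_pchar_expnD // addrACA. Qed.

Lemma rel_traceN (x : K) : rel_trace p k (- x) = - rel_trace p k x.
Proof. by rewrite /rel_trace expr_pchar_expnN // opprD. Qed.

Lemma expr_frobenius_invol (x : K) : x ^+ q ^+ q = x.
Proof. by rewrite -exprM -expnD addnn -mul2n -cardK expf_card. Qed.

Lemma expr_rel_trace0 (u : K) : rel_trace p k u = 0 -> u ^+ q = - u.
Proof. by rewrite /rel_trace addrC => /eqP; rewrite addr_eq0 => /eqP. Qed.

Lemma rel_trace_frobeniusB (x : K) : rel_trace p k (x ^+ q - x) = 0.
Proof.
by rewrite /rel_trace expr_pchar_expnB // expr_frobenius_invol addrC addrA subrK subrr.
Qed.

Lemma expr_even_rel_trace0 (u : K) s :
  rel_trace p k u = 0 -> ~~ odd s -> u ^+ (q * s) = u ^+ s.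
Proof.
move=> /expr_rel_trace0 uq s_even.
by rewrite exprM uq -(odd_double_half s) (negbTE s_even) -mul2n !exprM sqrrN.
Qed.

End TraceZero.

Section Proposition6.

Variables (K : finFieldType) (p k : nat).
Hypothesis pcharK : p \in [pchar K].
Hypothesis cardK : #|K| = (p ^ (2 * k))%N.
Variable c : nat -> K.
Hypothesis c_sub : forall j, (j < 2 * k)%N -> in_subfield p k (c j).
Hypothesis L_bij : bijective (linearized p (2 * k) c).
Variables (delta : K) (s : nat).
Hypothesis delta_trace0 : rel_trace p k delta = 0.
Hypothesis s_even : ~~ odd s.

Local Notation q := (p ^ k)%N.
Local Notation L := (linearized p (2 * k) c).
Local Notation S := (fun y : K => rel_trace p k y == 0).

Lemma permutes_on_trace0 :
  permutes_on S (fun x => - L x + (x + delta) ^+ s - (x + delta) ^+ (q * s)).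
Proof.
have G_S y : S y -> - L y + (y + delta) ^+ s - (y + delta) ^+ (q * s) = - L y.
  move=> /eqP y0; rewrite expr_even_rel_trace0 ?addrK //.
  by rewrite rel_traceD // y0 delta_trace0 addr0.
split=> [y Sy | x y Sx Sy] /=; rewrite !G_S //.
  by rewrite rel_traceN // rel_trace_linearized // (eqP Sy) linearized0 // oppr0.
by move/oppr_inj/(bij_inj L_bij).
Qed.

Lemma bijective_perturbed_linearized :
  bijective (fun x : K => L x + (x ^+ q - x + delta) ^+ s).
Proof.
have W_sub x : ((x ^+ q - x + delta) ^+ s) ^+ q = (x ^+ q - x + delta) ^+ s.
  rewrite -exprM mulnC expr_even_rel_trace0 //.
  by rewrite rel_traceD // rel_trace_frobeniusB // delta_trace0 addr0.
have F_frobeniusB x :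
    (L x + (x ^+ q - x + delta) ^+ s) ^+ q - (L x + (x ^+ q - x + delta) ^+ s)
    = L (x ^+ q - x).
  rewrite expr_pchar_expnD // W_sub expr_linearized_subfield // linearizedB //.
  by rewrite opprD addrACA subrr addr0.
apply: injF_bij => x y /= Fxy.
have xy_frobeniusB : x ^+ q - x = y ^+ q - y.
  by apply: (bij_inj L_bij); rewrite -!F_frobeniusB Fxy.
apply: (bij_inj L_bij); apply: (addIr ((x ^+ q - x + delta) ^+ s)).
by rewrite Fxy xy_frobeniusB.
Qed.

End Proposition6.

Theorem proposition6 (K : finFieldType) (p k : nat)
  (hp : prime p) (hodd : odd p) (hchar : p \in [pchar K])
  (hk : (0 < k)%N) (hcard : #|K| = (p ^ (2 * k))%N)
  (c : nat -> K) (hc : forall j, (j < 2 * k)%N -> in_subfield p k (c j))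
  (hL : bijective (linearized p (2 * k) c))
  (delta : K) (hdelta : rel_trace p k delta = 0)
  (s : nat) (hs_even : ~~ odd s) (hs_pos : (2 <= s)%N)
  (hs_le : (s <= p ^ (2 * k) - 1)%N) :
  permutes_on (fun y : K => rel_trace p k y == 0)
    (fun x => - linearized p (2 * k) c x + (x + delta) ^+ s
              - (x + delta) ^+ (p ^ k * s))
  /\ bijective (fun x : K => linearized p (2 * k) c x
                  + (x ^+ (p ^ k) - x + delta) ^+ s).
Proof.
split; first exact: permutes_on_trace0.
exact: bijective_perturbed_linearized.
Qed.
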